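(* Let $f$, $Q$, $L$, $d_Q$ be as in the context, let $x^*\in Q$ be a minimizer of $f$ over $Q$ with $f^*=f(x^* )$, let $T\in\mathbb{N}_0$, and let the sequences $(z_t)$, $(\hat x_t)$, $(u_t)$, $(\Gamma_t)$, $(L_t)$ be generated by the algorithm described in the context. Then \[ f(u_T)-f^*\le\frac{1}{\Gamma_T}\Big[L_Td_Q(x^* )+\sum_{t=0}^{T-1}(L_t-L_{t+1})\Big(d_Q(z_{t+1})-\tfrac12\|z_t-\hat x_{t+1}\|^2\Big)\Big]. \]
   Context: $\mathbb{R}^n$ carries the standard scalar product $\langle\cdot,\cdot\rangle$ and a (possibly different) norm $\|\cdot\|$, with dual norm $\|u\|_*=\max\{\langle u,x\rangle:\|x\|=1\}$. $Q\subseteq\mathbb{R}^n$ is closed and convex; $f:\mathbb{R}^n\to\mathbb{R}$ is convex, differentiable, attains its minimum on $Q$, and $L>0$ satisfies $\|\nabla f(x)-\nabla f(y)\|_*\le L\|x-y\|$ for all $x,y\in Q$. A distance-generating function for $Q$ is $d_Q:Q\to\mathbb{R}_{\ge0}$ that is continuous on $Q$, strongly convex with modulus 1 w.r.t. $\|\cdot\|$, and whose subdifferential admits a continuous selection $d_Q'$ on $Q^o:=\{x\in Q:\partial d_Q(x)\neq\emptyset\}$. For $z\in Q^o$, $V_z(x)=d_Q(x)-d_Q(z)-\langle d_Q'(z),x-z\rangle$ and $\mathrm{Prox}_{Q,z}(s)=\arg\min_{x\in Q}\{\langle s,x-z\rangle+V_z(x)\}$. The $d_Q$-center is $c(d_Q)=\arg\min_{x\in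 Q}d_Q(x)$, and it is assumed that $d_Q(c(d_Q))=0$. Algorithm: choose $T\in\mathbb{N}_0$ and numbers $(\gamma_t)_{t=0}^{T+1}$ with $\gamma_0\in(0,1]$, $\gamma_t\ge0$ and $\gamma_t^2\le\Gamma_t:=\sum_{k=0}^t\gamma_k$ for all $0\le t\le T+1$. Set $L_0=L$, $x_0=c(d_Q)$, $u_0=\arg\min_{x\in Q}\{\gamma_0(f(x_0)+\langle\nabla f(x_0),x-x_0\rangle)+L_0d_Q(x)\}$, $z_0=u_0$, $\tau_0=\gamma_1/\Gamma_1$, $x_1=\tau_0z_0+(1-\tau_0)u_0$, $\hat x_1=\mathrm{Prox}_{Q,z_0}(\gamma_1\nabla f(x_1)/L_0)$, $u_1=\tau_0\hat x_1+(1-\tau_0)u_0$. For $t=1,\dots,T$: choose $0<L_t\le L$ with $f(u_t)\le f(x_t)+\langle\nabla f(x_t),u_t-x_t\rangle+\frac{L_t}{2}\|u_t-x_t\|^2$; set $z_t=\arg\min_{x\in Q}\{\sum_{k=0}^t\gamma_k(f(x_k)+\langle\nabla f(x_k),x-x_k\rangle)+L_td_Q(x)\}$; set $\tau_t=\gamma_{t+1}/\Gamma_{t+1}$ and $x_{t+1}=\tau_tz_t+(1-\tau_t)u_t$; set $\hat x_{t+1}=\mathrm{Prox}_{Q,z_t}(\gamma_{t+1}\nabla f(x_{t+1})/L_t)$; set $u_{t+1}=\tau_t\hat x_{t+1}+(1-\tau_t)u_t$. *)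

From HB Require Import structures.
From mathcomp Require Import all_boot all_order all_algebra.
From mathcomp Require Import all_classical all_reals all_analysis.
Set Implicit Arguments. Unset Strict Implicit. Unset Printing Implicit Defensive.
Import Order.TTheory GRing.Theory Num.Theory.
Import numFieldNormedType.Exports.
Local Open Scope classical_set_scope.
Local Open Scope ring_scope.

Section Defs.
Variables (R : realType) (n : nat).
Local Notation vec := 'rV[R]_n.

Definition dotv (u v : vec) : R := \sum_(i < n) u ord0 i * v ord0 i.

Definition is_norm (nrm : vec -> R) : Prop :=
  [/\ forall x, 0 <= nrm x,
      forall x, nrm x = 0 -> x = 0,
      forall (a : R) x, nrm (a *: x) = `|a| * nrm x
    & forall x y, nrm (x + y) <= nrm x + nrm y].

Definition dual_norm (nrm : vec -> R) (u : vec) : R :=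
  sup [set dotv u x | x in [set x | nrm x = 1]].

Definition convex_setv (Q : set vec) : Prop :=
  forall x y (lam : R), Q x -> Q y -> 0 <= lam <= 1 ->
    Q (lam *: x + (1 - lam) *: y).

Definition convex_funv (f : vec -> R) : Prop :=
  forall x y (lam : R), 0 <= lam <= 1 ->
    f (lam *: x + (1 - lam) *: y) <= lam * f x + (1 - lam) * f y.

Definition is_gradient (f : vec -> R) (gradf : vec -> vec) : Prop :=
  forall x, differentiable f x /\ forall v, 'd f x v = dotv (gradf x) v.

Definition strongly_convex1 (nrm : vec -> R) (Q : set vec) (d : vec -> R) : Prop :=
  forall x y (lam : R), Q x -> Q y -> 0 <= lam <= 1 ->
    d (lam *: x + (1 - lam) *: y) <=
      lam * d x + (1 - lam) * d y - 2^-1 * lam * (1 - lam) * (nrm (x - y)) ^+ 2.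

Definition subdiff (Q : set vec) (d : vec -> R) (x : vec) : set vec :=
  [set g | forall y, Q y -> d x + dotv g (y - x) <= d y].

Definition Qo (Q : set vec) (d : vec -> R) : set vec :=
  [set x | Q x /\ subdiff Q d x !=set0].

Definition dist_gen (nrm : vec -> R) (Q : set vec) (d : vec -> R)
    (d' : vec -> vec) : Prop :=
  [/\ forall x, Q x -> 0 <= d x,
      {within Q, continuous d},
      strongly_convex1 nrm Q d,
      forall x, Qo Q d x -> subdiff Q d x (d' x)
    & {within Qo Q d, continuous d'}].

Definition bregman (d : vec -> R) (d' : vec -> vec) (z x : vec) : R :=
  d x - d z - dotv (d' z) (x - z).

Definition is_argmin (Q : set vec) (phi : vec -> R) (x : vec) : Prop :=
  Q x /\ forall y, Q y -> phi x <= phi y.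

Definition is_prox (Q : set vec) (d : vec -> R) (d' : vec -> vec)
    (z s x : vec) : Prop :=
  is_argmin Q (fun y => dotv s (y - z) + bregman d d' z y) x.

Definition linmod (f : vec -> R) (gradf : vec -> vec) (xk y : vec) : R :=
  f xk + dotv (gradf xk) (y - xk).

End Defs.

Definition Gam (R : realType) (gamma : nat -> R) (t : nat) : R :=
  \sum_(k < t.+1) gamma k.

From HB Require Import structures.
From mathcomp Require Import all_boot all_order all_algebra.
From mathcomp Require Import all_classical all_reals all_analysis.
From mathcomp Require Import ring lra.
Set Implicit Arguments. Unset Strict Implicit. Unset Printing Implicit Defensive.
Import Order.TTheory GRing.Theory Num.Theory.
Import numFieldNormedType.Exports.
Local Open Scope classical_set_scope.
Local Open Scope ring_scope.

(* An estimate-sequence argument.  The lower models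
     psi_t(y) = sum_(k <= t) gamma_k (f(x_k) + <grad f(x_k), y - x_k>) + L_t d(y)
   are minimized over Q at z_t, and by induction
     Gamma_t f(u_t) <= psi_t(z_t) + E_t,
   where E_t is the sum on the right-hand side of the bound; since
   psi_T(x^* ) <= Gamma_T f(x^* ) + L_T d(x^* ), this gives the claim.  The inductive
   step combines the descent condition at u_(t+1) (where gamma_(t+1)^2 <= Gamma_(t+1)
   absorbs the quadratic term), the optimality of the prox step, the bound
   V_z(y) >= ||y - z||^2 / 2 given by strong convexity, and the three-point
   inequality psi_t(z_t) + L_t V_(z_t)(y) <= psi_t(y).
   As d' is merely a continuous selection of the subdifferential, the three-point
   inequality is obtained as a limit of first-order conditions at points of Q^o,
   which is dense in Q because proximal points of d lie in Q^o.  The descent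
   lemma for the initial step is proved without integrals, by summing the
   gradient inequality along a subdivision of the segment. *)

(** * Scalar product and norms *)

Section ScalarProduct.
Variables (R : realType) (n : nat).
Local Notation vec := 'rV[R]_n.
Implicit Types (u v w : vec) (a : R).

Lemma dotvC u v : dotv u v = dotv v u.
Proof. by apply: eq_bigr => i _; rewrite mulrC. Qed.

Lemma dotvDl u v w : dotv (u + v) w = dotv u w + dotv v w.
Proof. by rewrite /dotv -big_split; apply: eq_bigr => i _; rewrite mxE mulrDl. Qed.

Lemma dotvZl a u w : dotv (a *: u) w = a * dotv u w.
Proof. by rewrite /dotv mulr_sumr; apply: eq_bigr => i _; rewrite mxE mulrA. Qed.

Lemma dotvNl u w : dotv (- u) w = - dotv u w.
Proof. by rewrite -scaleN1r dotvZl mulN1r. Qed.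

Lemma dotvBl u v w : dotv (u - v) w = dotv u w - dotv v w.
Proof. by rewrite dotvDl dotvNl. Qed.

Lemma dotvDr u v w : dotv w (u + v) = dotv w u + dotv w v.
Proof. by rewrite dotvC dotvDl !(dotvC w). Qed.

Lemma dotvZr a u w : dotv w (a *: u) = a * dotv w u.
Proof. by rewrite dotvC dotvZl dotvC. Qed.

Lemma dotvNr u w : dotv w (- u) = - dotv w u.
Proof. by rewrite dotvC dotvNl dotvC. Qed.

Lemma dotvBr u v w : dotv w (u - v) = dotv w u - dotv w v.
Proof. by rewrite dotvDr dotvNr. Qed.

Lemma dotv0l w : dotv 0 w = 0.
Proof. by rewrite -(scale0r 0) dotvZl mul0r. Qed.

Lemma dotv0r w : dotv w 0 = 0.
Proof. by rewrite dotvC dotv0l. Qed.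

Lemma dotv_suml m (F : 'I_m -> vec) w :
  dotv (\sum_i F i) w = \sum_i dotv (F i) w.
Proof. exact: (big_morph (fun u => dotv u w) (fun u v => dotvDl u v w) (dotv0l w)). Qed.

Lemma dotvv_ge0 v : 0 <= dotv v v.
Proof. by apply: sumr_ge0 => i _; rewrite -expr2 sqr_ge0. Qed.

Lemma normr_coord_le v i : `|v ord0 i| <= `|v|.
Proof.
rewrite [`|v|]mx_normrE; apply/bigmax_geP; right => /=.
by exists (ord0, i); rewrite ?mem_index_enum.
Qed.

Lemma normr_dotv_le u v : `|dotv u v| <= n%:R * `|u| * `|v|.
Proof.
apply: le_trans (ler_norm_sum _ _ _) _.
rewrite -mulrA mulr_natl -[X in _ *+ X](card_ord n) -sumr_const.
by apply: ler_sum => i _; rewrite normrM ler_pM ?normr_coord_le.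
Qed.

Lemma sqr_norm_le_dotv v : `|v| ^+ 2 <= dotv v v.
Proof.
rewrite [`|v|]mx_normrE; elim/big_ind: _ => [|a b|[i j] _].
- by rewrite expr0n dotvv_ge0.
- by rewrite /Num.max; case: ifP.
- rewrite /= (ord1 i) real_normK ?num_real // /dotv (bigD1 j) //= -expr2 lerDl.
  by apply: sumr_ge0 => k _; rewrite -expr2 sqr_ge0.
Qed.

Lemma dotv_continuous (g h : vec -> vec) :
  continuous g -> continuous h -> continuous (fun v => dotv (g v) (h v)).
Proof.
move=> cg ch; apply: continuous_big => [|i _ v]; first exact: add_continuous.
by apply: continuousM; apply: (continuous_comp (g := fun M : vec => M ord0 i));
  [exact: cg | exact: coord_continuous | exact: ch | exact: coord_continuous].
Qed.

Lemma convex_combB a u v : a *: u + (1 - a) *: v - v = a *: (u - v).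
Proof. by rewrite scalerBl scale1r scalerBr addrA addrAC addrK. Qed.

Lemma dotv_addZ_sqr u v a :
  dotv (u + a *: v) (u + a *: v) = dotv u u + 2 * a * dotv u v + a ^+ 2 * dotv v v.
Proof. by rewrite !dotvDl !dotvDr !dotvZl !dotvZr (dotvC v u); ring. Qed.

Lemma dotv_le_perturb (u u' w : vec) (eta : R) : `|u - u'| <= eta ->
  dotv u' w <= dotv u w + n%:R * eta * `|w|.
Proof.
move=> uu'; have -> : dotv u' w = dotv u w + dotv (u' - u) w.
  by rewrite dotvBl addrC subrK.
rewrite lerD2l; apply: le_trans (ler_norm _) (le_trans (normr_dotv_le _ _) _).
by rewrite distrC ler_wpM2r // ler_wpM2l.
Qed.

End ScalarProduct.

Lemma lipschitz_continuous (R : realFieldType) (V : normedModType R) (g : V -> R) (K : R) :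
  (forall x y, `|g x - g y| <= K * `|x - y|) -> continuous g.
Proof.
move=> gK x; apply/(@cvgrPdist_lt _ _ _ (nbhs x) _ g (g x)) => e e0.
apply/(@nbhs_normP R V x).
exists (e / (`|K| + 1)) => [/=|y /= xy]; first by rewrite divr_gt0 ?ltr_pwDr.
apply: le_lt_trans (gK x y) (le_lt_trans (_ : _ <= (`|K| + 1) * `|x - y|) _).
  by rewrite ler_wpM2r // (le_trans (ler_norm K)) ?lerDl.
by rewrite mulrC -ltr_pdivlMr ?ltr_pwDr.
Qed.

Lemma le0_of_forall_ler_mul (R : realFieldType) (a b : R) :
  (forall t, 0 < t < 1 -> a <= t * b) -> a <= 0.
Proof.
move=> H; rewrite leNgt; apply/negP => a0.
have ab0 : 0 < `|b| + a by rewrite ltr_pwDr.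
set t := a / (2 * (`|b| + a)).
have t0 : 0 < t by rewrite divr_gt0 ?mulr_gt0.
have t1 : t < 1 by rewrite ltr_pdivrMr ?mulr_gt0 //; have := normr_ge0 b; lra.
have tb : t * b <= t * `|b| by rewrite ler_pM2l // ler_norm.
have ta : t * (`|b| + a) = a / 2 by rewrite /t; field; rewrite gt_eqF.
have := mulr_gt0 t0 a0; have := H t; rewrite t0 t1 => /(_ isT); lra.
Qed.

Lemma ler_of_ler_addr_divn (R : archiRealFieldType) (a b : R) :
  (forall N, (0 < N)%N -> a <= b + b / N%:R) -> a <= b.
Proof.
move=> H; rewrite leNgt; apply/negP => ba.
have b0 : 0 <= b by have := H 1%N isT; rewrite divr1; lra.
set N := (Num.truncn (b / (a - b))).+1.
have bN : b / (a - b) < N%:R.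
  by rewrite /N -truncn_lt_nat ?ltnSn // divr_ge0 // subr_ge0 ltW.
have := H N isT; rewrite ltr_pdivrMr ?subr_gt0 // mulrC -ltr_pdivrMr ?ltr0n // in bN.
lra.
Qed.

Lemma sum_natr_succ (R : numFieldType) N :
  \sum_(0 <= k < N) (k.+1)%:R = (N * N.+1)%:R / 2 :> R.
Proof.
elim: N => [|N IH]; first by rewrite big_geq // mul0n mul0r.
by rewrite big_nat_recr //= IH !natrM -!natr1; field.
Qed.

Section Norm.
Variables (R : realType) (n : nat) (nrm : 'rV[R]_n -> R).
Hypothesis nrm_norm : is_norm nrm.
Local Notation vec := 'rV[R]_n.
Implicit Types (u v w : vec).

Lemma nrm_ge0 v : 0 <= nrm v. Proof. by case: nrm_norm. Qed.
Lemma nrm_eq0 v : nrm v = 0 -> v = 0. Proof. by case: nrm_norm => _ + _ _; apply. Qed.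
Lemma nrmZ a v : nrm (a *: v) = `|a| * nrm v. Proof. by case: nrm_norm. Qed.
Lemma ler_nrmD v w : nrm (v + w) <= nrm v + nrm w. Proof. by case: nrm_norm. Qed.

Lemma nrm0 : nrm 0 = 0.
Proof. by rewrite -(scale0r (0 : vec)) nrmZ normr0 mul0r. Qed.

Lemma nrmN v : nrm (- v) = nrm v.
Proof. by rewrite -scaleN1r nrmZ normrN normr1 mul1r. Qed.

Lemma nrm_distC v w : nrm (v - w) = nrm (w - v).
Proof. by rewrite -nrmN opprB. Qed.

Lemma nrm_gt0 v : v != 0 -> 0 < nrm v.
Proof. by move=> v0; rewrite lt_def nrm_ge0 andbT; apply: contra v0 => /eqP/nrm_eq0->. Qed.

Lemma nrm_le_normr : exists2 C, 0 <= C & forall v, nrm v <= C * `|v|.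
Proof.
exists (\sum_(i < n) nrm 'e_i) => [|v]; first by rewrite sumr_ge0 // => i _; exact: nrm_ge0.
rewrite {1}(row_sum_delta v) mulr_suml.
apply: le_trans (_ : _ <= \sum_i nrm (v ord0 i *: 'e_i)) _.
  by elim/big_rec2: _ => [|i a b _ IH]; rewrite ?nrm0 // (le_trans (ler_nrmD _ _)) ?lerD2l.
by apply: ler_sum => i _; rewrite nrmZ mulrC ler_wpM2l ?nrm_ge0 ?normr_coord_le.
Qed.

Lemma nrm_continuous : continuous nrm.
Proof.
have [C C0 nrmC] := nrm_le_normr.
apply: (@lipschitz_continuous _ _ _ C) => v w; rewrite ler_norml.
have := ler_nrmD (v - w) w; have := ler_nrmD (w - v) v.
rewrite !subrK nrm_distC; have := nrmC (v - w); lra.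
Qed.

(* [nrm] attains a positive minimum on the compact unit sphere of the sup-norm. *)
Lemma normr_le_nrm : exists2 m, 0 < m & forall v, m * `|v| <= nrm v.
Proof.
pose S := [set v : vec | `|v| = 1].
have unit_S v : v != 0 -> S (`|v|^-1 *: v).
  by move=> v0; rewrite /S /= normrZ normfV normr_id mulVf ?normr_eq0.
have [[s Ss]|S0] := pselect (S !=set0); last first.
  exists 1 => // v; have [->|v0] := eqVneq v 0; first by rewrite normr0 mulr0 nrm_ge0.
  by exfalso; apply: S0; exists (`|v|^-1 *: v); exact: unit_S.
have cS : compact S.
  apply: bounded_closed_compact.
    by exists 1; split=> // M M1 v Sv; rewrite /= Sv ltW.
  rewrite (_ : S = (fun v : vec => `|v|) @^-1` [set x : R | x = 1]) //.
  by apply: preimage_closed; [move=> v _; exact: norm_continuous | exact: closed_eq].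
have [c Sc cmin] := EVT_min_rV (ex_intro _ s Ss) cS (continuous_subspaceT nrm_continuous).
have c0 : c != 0.
  by apply/eqP => c0; move: Sc; rewrite inE /S /= c0 normr0 => /esym/eqP; rewrite oner_eq0.
exists (nrm c) => [|v]; first exact: nrm_gt0.
have [->|v0] := eqVneq v 0; first by rewrite normr0 mulr0 nrm_ge0.
have := cmin _ (mem_set (unit_S v v0)).
by rewrite nrmZ normfV normr_id ler_pdivlMl ?normr_gt0 // mulrC.
Qed.

Lemma dotv_le_dual_norm u v : dotv u v <= dual_norm nrm u * nrm v.
Proof.
have [->|v0] := eqVneq v 0; first by rewrite dotv0r nrm0 mulr0.
have [m m0 mnrm] := normr_le_nrm.
have nrmv0 := nrm_gt0 v0.
set A := [set dotv u x | x in [set x | nrm x = 1]].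
have Av : A (dotv u ((nrm v)^-1 *: v)).
  by exists ((nrm v)^-1 *: v) => //=; rewrite nrmZ normfV gtr0_norm // mulVf ?gt_eqF.
have supA : has_sup A.
  split; first by exists (dotv u ((nrm v)^-1 *: v)).
  exists (n%:R * `|u| / m) => _ [x /= x1 <-].
  apply: le_trans (ler_norm _) (le_trans (normr_dotv_le _ _) _).
  rewrite ler_pdivlMr // -!mulrA ler_wpM2l // ler_piMr // -x1 mulrC; exact: mnrm.
by move: (sup_upper_bound supA Av); rewrite dotvZr mulrC ler_pdivrMr.
Qed.

End Norm.

(** * Convex functions and the descent lemma *)

Section LinearModel.
Variables (R : realType) (n : nat) (f : 'rV[R]_n -> R) (gradf : 'rV[R]_n -> 'rV[R]_n).

Lemma linmod_le :
  convex_funv f -> is_gradient f gradf ->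
  forall x y, linmod f gradf x y <= f y.
Proof.
move=> cf gf x y; have [dfx dfE] := gf x; set v := y - x.
have dfv : derivable f x v := diff_derivable dfx.
suff : 'D_v f x <= f y - f x by rewrite /linmod -/v deriveE // dfE; lra.
rewrite /derive (cvg_at_rightE _ _ dfv); apply: limr_le.
  by apply: cvgP _ (cvg_dnbhs_at_right dfv).
near=> h; have h0 : 0 < h by near: h; exact: nbhs_right_gt.
have h1 : h < 1 by near: h; exact: nbhs_right_lt.
have := cf y x h; rewrite (ltW h0) (ltW h1) => /(_ isT).
have -> : h *: y + (1 - h) *: x = h *: v + x.
  by rewrite /v scalerBr scalerBl scale1r addrA addrAC.
by rewrite /= /GRing.scale /= ler_pdivrMl //; lra.
Unshelve. all: by end_near.
Qed.

Lemma linmodB xk y w : linmod f gradf xk y - linmod f gradf xk w = dotv (gradf xk) (y - w).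
Proof. by rewrite /linmod !dotvBr; ring. Qed.

Lemma linmod_comb xk a p q : linmod f gradf xk (a *: p + (1 - a) *: q) =
  a * linmod f gradf xk p + (1 - a) * linmod f gradf xk q.
Proof. by rewrite /linmod !dotvBr dotvDr !dotvZr; ring. Qed.

End LinearModel.

Section Descent.
Variables (R : realType) (n : nat) (nrm : 'rV[R]_n -> R) (Q : set 'rV[R]_n)
  (f : 'rV[R]_n -> R) (gradf : 'rV[R]_n -> 'rV[R]_n) (L : R).
Hypothesis nrm_norm : is_norm nrm.
Hypothesis Q_convex : convex_setv Q.
Hypothesis f_convex : convex_funv f.
Hypothesis f_grad : is_gradient f gradf.
Hypothesis gradf_lipschitz : forall y w, Q y -> Q w ->
  dual_norm nrm (gradf y - gradf w) <= L * nrm (y - w).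

Lemma descent_chord y w s t : Q y -> Q w -> 0 <= s <= t -> t <= 1 ->
  f (y + t *: (w - y)) - f (y + s *: (w - y)) <=
    (t - s) * (dotv (gradf y) (w - y) + L * t * nrm (w - y) ^+ 2).
Proof.
move=> Qy Qw /andP[s0 st] t1; set h := w - y; set p := y + t *: h.
have Qp : Q p.
  rewrite /p (_ : _ + _ = t *: w + (1 - t) *: y); last first.
    by rewrite /h scalerBr scalerBl scale1r addrCA.
  by apply: Q_convex; rewrite ?t1 ?(le_trans s0 st).
have := linmod_le f_convex f_grad p (y + s *: h).
rewrite /linmod (_ : _ - p = - ((t - s) *: h)); last first.
  by rewrite /p scalerBl opprB opprD addrACA subrr add0r.
rewrite dotvNr dotvZr => fp.
have t0 := le_trans s0 st.
have Lp := gradf_lipschitz Qp Qy.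
rewrite (_ : p - y = t *: h) ?nrmZ // ?ger0_norm // in Lp; last first.
  by rewrite /p addrAC subrr add0r.
have key : dotv (gradf p) h <= dotv (gradf y) h + L * t * nrm h ^+ 2.
  have := dotv_le_dual_norm nrm_norm (gradf p - gradf y) h.
  have := ler_wpM2r (nrm_ge0 nrm_norm h) Lp.
  rewrite dotvBl expr2 -!mulrA; lra.
have := ler_wpM2l (_ : 0 <= t - s) key; rewrite subr_ge0 => /(_ st); lra.
Qed.

Lemma descent_lemma y w : Q y -> Q w ->
  f w <= linmod f gradf y w + L / 2 * nrm (w - y) ^+ 2.
Proof.
move=> Qy Qw; rewrite /linmod; set h := w - y; set D := dotv (gradf y) h.
set n2 := nrm h ^+ 2.
suff : f w - f y - D <= L / 2 * n2 by lra.
apply: ler_of_ler_addr_divn => N N0; have N0' : N%:R != 0 :> R by rewrite pnatr_eq0 -lt0n.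
pose p k := y + (k%:R / N%:R) *: h.
have tele : f w - f y = \sum_(0 <= k < N) (f (p k.+1) - f (p k)).
  by rewrite telescope_sumr // /p mulfV // scale1r mul0r scale0r addr0 /h [y + _]addrC subrK.
have step k : (0 <= k < N)%N ->
    f (p k.+1) - f (p k) <= N%:R^-1 * D + k.+1%:R * (L * n2 / N%:R ^+ 2).
  move=> /andP[_ kN].
  have := @descent_chord y w (k%:R / N%:R) (k.+1%:R / N%:R) Qy Qw.
  rewrite divr_ge0 // ler_wpM2r ?invr_ge0 ?ler_nat // ler_pdivrMr ?ltr0n // mul1r ler_nat.
  move=> /(_ isT kN); rewrite -mulrBl -natrB // subSnn -/D -/n2.
  by have -> : N%:R^-1 * D + k.+1%:R * (L * n2 / N%:R ^+ 2) =
               1%:R / N%:R * (D + L * (k.+1%:R / N%:R) * n2) by field.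
have := ler_sum_nat step; rewrite -tele big_split /= sumr_const_nat subn0.
rewrite -mulr_suml sum_natr_succ natrM -natr1 -[_ *+ N]mulr_natr.
have -> : N%:R^-1 * D * N%:R = D by field.
have -> : N%:R * (N%:R + 1) / 2 * (L * n2 / N%:R ^+ 2) = L / 2 * n2 + L / 2 * n2 / N%:R.
  by field.
lra.
Qed.

End Descent.

Lemma within_continuous_dist_lt (R : realType) (V W : normedModType R) (A : set V)
    (c : V -> W) z eta :
  A z -> {within A, continuous c} -> 0 < eta ->
  exists2 del, 0 < del & forall p, A p -> `|z - p| < del -> `|c z - c p| < eta.
Proof.
move=> Az cc eta0.
have /(@cvgrPdist_lt _ _ _ (within A (nbhs z)) _ c (c z)) :=
  (proj1 (subspace_continuousP A c) cc) z Az.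
move=> /(_ eta eta0) /(@nbhs_normP R V z) [del del0 H].
by exists del => // p Ap zp; apply: H.
Qed.

Section VariationalLimit.
Variables (R : realType) (n : nat).
Local Notation vec := 'rV[R]_n.

Lemma exists_near_segment (A : set vec) z v del e : 0 < del -> 0 < e ->
  (forall l e, 0 < l <= 1 -> 0 < e -> exists2 p, A p & `|p - (z + l *: v)| < e) ->
  exists l p, [/\ 0 < l, A p, `|z - p| < del & `|p - (z + l *: v)| < l * e].
Proof.
move=> del0 e0 Adense; set l := Num.min 1 (del / (2 * (`|v| + 1))).
have l0 : 0 < l by rewrite lt_min ltr01 divr_gt0 // mulr_gt0 // ltr_pwDr.
have lv : l * `|v| < del / 2.
  have : l * (`|v| + 1) <= del / 2.
    by rewrite -ler_pdivlMr ?ltr_pwDr // -mulrA -invfM /l ge_min lexx orbT.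
  lra.
have [p Ap pq] : exists2 p, A p & `|p - (z + l *: v)| < Num.min (del / 2) (l * e).
  apply: Adense; first by rewrite l0 /l ge_min lexx.
  by rewrite lt_min divr_gt0 // mulr_gt0.
exists l, p; split => //; last by apply: lt_le_trans pq _; rewrite ge_min lexx orbT.
have := ler_distD (z + l *: v) z p.
rewrite opprD addNKr normrN normrZ gtr0_norm // (distrC (z + _)).
have : Num.min (del / 2) (l * e) <= del / 2 by rewrite ge_min lexx.
lra.
Qed.

Lemma dotv_ge0_limit (A : set vec) (c : vec -> vec) z v :
  A z -> {within A, continuous c} ->
  (forall p, A p -> 0 <= dotv (c p) (p - z)) ->
  (forall l e, 0 < l <= 1 -> 0 < e -> exists2 p, A p & `|p - (z + l *: v)| < e) ->
  0 <= dotv (c z) v.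
Proof.
move=> Az cc cA Adense; rewrite leNgt; apply/negP => Sneg.
set c0 := - dotv (c z) v; have c00 : 0 < c0 by rewrite oppr_gt0.
set eta := c0 / (2 * (n%:R * `|v| + 1)).
have eta0 : 0 < eta by rewrite divr_gt0 // mulr_gt0 // ltr_pwDr // mulr_ge0.
have etav : n%:R * eta * `|v| <= c0 / 2.
  have : (n%:R * `|v| + 1) * eta = c0 / 2.
    by rewrite /eta; field; rewrite gt_eqF // ltr_pwDr // mulr_ge0.
  lra.
have [del del0 cnear] := within_continuous_dist_lt Az cc eta0.
set K := n%:R * (`|c z| + eta); have K0 : 0 <= K by rewrite mulr_ge0 // addr_ge0 // ltW.
set e := c0 / (4 * (K + 1)); have e0 : 0 < e by rewrite divr_gt0 // mulr_gt0 // ltr_pwDr.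
have Ke : K * e <= c0 / 4.
  have : (K + 1) * e = c0 / 4 by rewrite /e; field; rewrite gt_eqF // ltr_pwDr.
  lra.
have [l [p [l0 Ap pz pq]]] := exists_near_segment del0 e0 Adense.
have cp := cnear p Ap pz.
have b1 : dotv (c p) v <= dotv (c z) v + c0 / 2.
  by have := dotv_le_perturb v (ltW cp); lra.
have b2 : dotv (c p) (p - (z + l *: v)) <= l * (c0 / 4).
  apply: le_trans (ler_norm _) (le_trans (normr_dotv_le _ _) _).
  have cpz : `|c p| <= `|c z| + eta.
    by have := ler_distD (c z) (c p) 0; rewrite !subr0 distrC; lra.
  have : n%:R * `|c p| * `|p - (z + l *: v)| <= K * (l * e).
    by rewrite /K ler_pM ?mulr_ge0 // ?ler_wpM2l // ltW.
  have := ler_wpM2l (ltW l0) Ke; lra.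
have := cA p Ap; have -> : p - z = l *: v + (p - (z + l *: v)).
  by rewrite [RHS]addrC opprD addrA subrK.
rewrite dotvDr dotvZr; have := ler_wpM2l (ltW l0) b1; have := mulr_gt0 l0 c00.
have : l * dotv (c z) v = - (l * c0) by rewrite /c0 mulrN opprK.
lra.
Qed.

End VariationalLimit.

(** * Distance-generating functions *)

Section StrongConvexity.
Variables (R : realType) (n : nat) (nrm : 'rV[R]_n -> R) (Q : set 'rV[R]_n)
  (d : 'rV[R]_n -> R).
Hypothesis Q_convex : convex_setv Q.
Hypothesis d_strong : strongly_convex1 nrm Q d.
Local Notation vec := 'rV[R]_n.

Lemma strongly_convex1_convex x y l : Q x -> Q y -> 0 <= l <= 1 ->
  d (l *: x + (1 - l) *: y) <= l * d x + (1 - l) * d y.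
Proof.
move=> Qx Qy l01; have := d_strong Qx Qy l01; case/andP: l01 => l0 l1.
have : 0 <= 2^-1 * l * (1 - l) * nrm (x - y) ^+ 2.
  by rewrite mulr_ge0 ?sqr_ge0 // !mulr_ge0 ?invr_ge0 ?ler0n // subr_ge0.
lra.
Qed.

Lemma strongly_convex1_subdiff g z y : Q z -> Q y -> subdiff Q d z g ->
  d z + dotv g (y - z) + 2^-1 * nrm (y - z) ^+ 2 <= d y.
Proof.
move=> Qz Qy gz; set N2 := 2^-1 * nrm (y - z) ^+ 2.
suff : N2 - (d y - d z - dotv g (y - z)) <= 0 by lra.
apply: (@le0_of_forall_ler_mul _ _ N2) => l /andP[l0 l1].
have l01 : 0 <= l <= 1 by rewrite !ltW.
have := gz _ (Q_convex Qy Qz l01); rewrite convex_combB dotvZr => sg.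
have sc := d_strong Qy Qz l01.
rewrite -(ler_pM2l l0) /N2; lra.
Qed.

End StrongConvexity.

Section DistanceGenerating.
Variables (R : realType) (n : nat) (nrm : 'rV[R]_n -> R) (Q : set 'rV[R]_n)
  (d : 'rV[R]_n -> R) (d' : 'rV[R]_n -> 'rV[R]_n).
Hypothesis Q_closed : closed Q.
Hypothesis Q_convex : convex_setv Q.
Hypothesis d_dist : dist_gen nrm Q d d'.
Local Notation vec := 'rV[R]_n.

Lemma dist_gen_ge0 y : Q y -> 0 <= d y.
Proof. by case: d_dist => + _ _ _ _; apply. Qed.

Lemma dist_gen_strong : strongly_convex1 nrm Q d.
Proof. by case: d_dist. Qed.

Lemma dist_gen_subdiff x : Qo Q d x -> subdiff Q d x (d' x).
Proof. by case: d_dist => _ _ _ + _; apply. Qed.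

Lemma bregman_ge_half_sqr z y : Qo Q d z -> Q y ->
  2^-1 * nrm (y - z) ^+ 2 <= bregman d d' z y.
Proof.
move=> Qoz Qy.
have := strongly_convex1_subdiff Q_convex dist_gen_strong Qoz.1 Qy (dist_gen_subdiff Qoz).
rewrite /bregman; lra.
Qed.

Section ProximalPoint.
Variables (q : vec) (M : R).
Hypotheses (Qq : Q q) (M0 : 0 < M).
Let F y := d y + M / 2 * dotv (y - q) (y - q).

Lemma exists_prox_point : exists p, is_argmin Q F p.
Proof.
pose g y := M / 2 * dotv (y - q) (y - q).
have gc : continuous g.
  have cq : continuous (fun y : vec => y - q).
    by move=> w; apply: (@cvgB _ _ _ (nbhs w) _ id (cst q)); [exact: cvg_id | exact: cvg_cst].
  move=> v; apply: (@cvgM _ _ (nbhs v) _ (cst (M / 2))); first exact: cvg_cst.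
  exact: (dotv_continuous cq cq).
pose K := Q `&` [set y | g y <= d q].
have Kq : K q by split; rewrite //= /g subrr dotv0r mulr0 dist_gen_ge0.
have cK : compact K.
  apply: bounded_closed_compact.
    exists (`|q| + 1 + 2 * d q / M); split; first exact: num_real.
    move=> B B0 y [_]; rewrite /= /g => gy; apply: le_trans (ltW B0).
    have : `|y - q| ^+ 2 <= 2 * d q / M.
      have := ler_wpM2l (ltW M0) (sqr_norm_le_dotv (y - q)).
      by rewrite ler_pdivlMr //; lra.
    have := ler_distD q y 0; rewrite !subr0.
    have : `|y - q| <= 1 + `|y - q| ^+ 2 by rewrite expr2; nra.
    lra.
  apply: closedI => //.
  by apply: (@preimage_closed _ _ g [set x | x <= d q]); [move=> v _; exact: gc | exact: closed_le].
have Fc : {within K, continuous F}.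
  apply/subspace_continuousP => x Kx; apply: cvgD.
    have dK : {within K, continuous d}.
      by case: d_dist => _ dc _ _ _; apply: continuous_subspaceW dc => y [].
    exact: (proj1 (subspace_continuousP K d) dK) x Kx.
  exact: (proj1 (subspace_continuousP K g) (continuous_subspaceT gc)) x Kx.
have [p /set_mem[Qp _] pmin] := EVT_min_rV (ex_intro _ q Kq) cK Fc.
exists p; split => // y Qy; have [gy|] := boolP (g y <= d q).
  by apply: pmin; rewrite inE.
have := pmin q (mem_set Kq); have := dist_gen_ge0 Qy; have := dist_gen_ge0 Qp.
rewrite -ltNge /F /g subrr dotv0r mulr0 addr0 /=; lra.
Qed.

Lemma prox_point_subdiff p : is_argmin Q F p -> subdiff Q d p (M *: (q - p)).
Proof.
case=> Qp pmin y Qy; rewrite -subr_le0.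
apply: (@le0_of_forall_ler_mul _ _ (M / 2 * dotv (y - p) (y - p))) => t /andP[t0 t1].
have t01 : 0 <= t <= 1 by rewrite !ltW.
have := pmin _ (Q_convex Qy Qp t01).
have := strongly_convex1_convex dist_gen_strong Qy Qp t01.
rewrite /F; have -> : t *: y + (1 - t) *: p - q = (p - q) + t *: (y - p).
  by rewrite -(convex_combB t y p) [RHS]addrC addrA subrK.
rewrite dotv_addZ_sqr => dc Fc; rewrite dotvZl -(opprB p q) dotvNl -(ler_pM2l t0); lra.
Qed.

End ProximalPoint.

Lemma Qo_dense q e : Q q -> 0 < e -> exists2 p, Qo Q d p & `|p - q| < e.
Proof.
move=> Qq e0; have dq0 := dist_gen_ge0 Qq.
set M := 2 * (d q + 1) / e ^+ 2.
have M0 : 0 < M by rewrite divr_gt0 ?exprn_gt0 // mulr_gt0 //; lra.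
have [p [Qp pmin]] := exists_prox_point Qq M0.
exists p; first by split => //; exists (M *: (q - p)); exact: prox_point_subdiff.
have := pmin q Qq; have := dist_gen_ge0 Qp; rewrite subrr dotv0r mulr0 addr0.
set D := dotv (p - q) (p - q) => dp pq.
have hD : (d q + 1) * D <= d q * e ^+ 2.
  have -> : (d q + 1) * D = M / 2 * D * e ^+ 2 by rewrite /M; field; rewrite gt_eqF.
  by rewrite ler_wpM2r ?sqr_ge0 //; lra.
have := sqr_norm_le_dotv (p - q); rewrite -/D => normD.
have De : D < e ^+ 2 by nra.
have := normr_ge0 (p - q); nra.
Qed.

Section ThreePoint.
Variables (phi : vec -> R) (a : vec) (Lc : R) (z : vec).
Hypotheses (Lc0 : 0 < Lc) (phi_affine : forall y w, phi y - phi w = dotv a (y - w)).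
Hypothesis z_min : is_argmin Q (fun y => phi y + Lc * d y) z.

Lemma argmin_Qo : Qo Q d z.
Proof.
case: z_min => Qz zmin; split => //; exists (- (Lc^-1 *: a)) => y Qy.
have := zmin y Qy; have := phi_affine y z => phiE /= ymin.
rewrite dotvNl dotvZl -(ler_pM2l Lc0) mulrDr mulrN mulrA mulfV ?gt_eqF // mul1r.
lra.
Qed.

Lemma argmin_dotv_ge0 w : Qo Q d w -> 0 <= dotv (a + Lc *: d' w) (w - z).
Proof.
case: z_min => Qz zmin Qow; have := dist_gen_subdiff Qow Qz.
have := zmin w Qow.1; have := phi_affine w z.
rewrite dotvDl dotvZl -(opprB w z) dotvNr => phiE wmin sub.
have := ler_wpM2l (ltW Lc0) sub; lra.
Qed.

Lemma argmin_three_point y : Q y ->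
  phi z + Lc * d z + Lc * bregman d d' z y <= phi y + Lc * d y.
Proof.
move=> Qy; suff : 0 <= dotv (a + Lc *: d' z) (y - z).
  by rewrite /bregman dotvDl dotvZl; have := phi_affine y z; lra.
have [Qz _] := z_min.
apply: (@dotv_ge0_limit _ _ (Qo Q d) (fun w => a + Lc *: d' w))
  => [||p|l e /andP[l0 l1] e0].
- exact: argmin_Qo.
- case: d_dist => _ _ _ _ d'c; apply/subspace_continuousP => w Qow.
  apply: cvgD; first exact: cvg_cst.
  by apply: cvgZr; exact: (proj1 (subspace_continuousP _ _) d'c w Qow).
- exact: argmin_dotv_ge0.
- apply: (Qo_dense _ e0).
  rewrite -convex_combB addrC subrK.
  by apply: Q_convex; rewrite // ltW.
Qed.

End ThreePoint.

End DistanceGenerating.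

(** * The estimate sequence *)

Lemma GamS (R : realType) (gamma : nat -> R) t : Gam gamma t.+1 = Gam gamma t + gamma t.+1.
Proof. by rewrite /Gam big_ord_recr. Qed.

Section EstimateSequence.
Variables (R : realType) (n : nat) (nrm : 'rV[R]_n -> R) (Q : set 'rV[R]_n)
  (f : 'rV[R]_n -> R) (gradf : 'rV[R]_n -> 'rV[R]_n)
  (d : 'rV[R]_n -> R) (d' : 'rV[R]_n -> 'rV[R]_n).
Hypothesis nrm_norm : is_norm nrm.
Hypothesis Q_closed : closed Q.
Hypothesis Q_convex : convex_setv Q.
Hypothesis f_convex : convex_funv f.
Hypothesis f_grad : is_gradient f gradf.
Hypothesis d_dist : dist_gen nrm Q d d'.
Local Notation vec := 'rV[R]_n.

Variables (T : nat) (gamma Lt : nat -> R) (x z xhat u : nat -> vec).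
Let G := Gam gamma.
Let tau t := gamma t.+1 / G t.+1.
Let phi t y := \sum_(k < t.+1) gamma k * linmod f gradf (x k) y.
Let psi t y := phi t y + Lt t * d y.
Let E t := \sum_(s < t) (Lt s - Lt s.+1) *
  (d (z s.+1) - 2^-1 * nrm (z s - xhat s.+1) ^+ 2).

Hypothesis gamma0 : 0 < gamma 0%N <= 1.
Hypothesis gamma_ge0 : forall t, (t <= T.+1)%N -> 0 <= gamma t.
Hypothesis gamma_sqr : forall t, (t <= T.+1)%N -> gamma t ^+ 2 <= G t.
Hypothesis Lt_gt0 : forall t, (t <= T)%N -> 0 < Lt t.
Hypothesis x0_min : is_argmin Q d (x 0%N).
Hypothesis d_x0 : d (x 0%N) = 0.
Hypothesis z0 : z 0%N = u 0%N.
Hypothesis z_min : forall t, (t <= T)%N -> is_argmin Q (psi t) (z t).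
Hypothesis u_descent : forall t, (t <= T)%N ->
  f (u t) <= linmod f gradf (x t) (u t) + Lt t / 2 * nrm (u t - x t) ^+ 2.
Hypothesis iteration : forall t, (t < T)%N -> [/\
  x t.+1 = tau t *: z t + (1 - tau t) *: u t,
  is_prox Q d d' (z t) ((gamma t.+1 / Lt t) *: gradf (x t.+1)) (xhat t.+1) &
  u t.+1 = tau t *: xhat t.+1 + (1 - tau t) *: u t].

Lemma Gam_gt0 t : (t <= T.+1)%N -> 0 < G t.
Proof.
elim: t => [|t IH] tT; first by rewrite /G /Gam big_ord1; case/andP: gamma0.
by rewrite /G GamS ltr_pwDl ?gamma_ge0 ?IH // ltnW.
Qed.

Lemma phiB t y w : phi t y - phi t w = dotv (\sum_(k < t.+1) gamma k *: gradf (x k)) (y - w).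
Proof.
rewrite /phi -sumrB dotv_suml; apply: eq_bigr => k _.
by rewrite -mulrBr linmodB dotvZl.
Qed.

Lemma estimate_invariant0 : G 0%N * f (u 0%N) <= psi 0%N (z 0%N).
Proof.
have [Qu0 _] := z_min (leq0n T); rewrite z0 in Qu0 *.
have sub0 : subdiff Q d (x 0%N) 0 by move=> y Qy; rewrite dotv0l addr0; exact: x0_min.2.
have := strongly_convex1_subdiff Q_convex (dist_gen_strong d_dist) x0_min.1 Qu0 sub0.
rewrite d_x0 dotv0l => sc.
have [g0 g01] := andP gamma0; have L0 := Lt_gt0 (leq0n T).
have := ler_wpM2l (ltW g0) (u_descent (leq0n T)).
have : gamma 0%N * (Lt 0%N / 2 * nrm (u 0%N - x 0%N) ^+ 2) <= Lt 0%N / 2 * nrm (u 0%N - x 0%N) ^+ 2.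
  by rewrite ler_piMl // mulr_ge0 ?sqr_ge0 // divr_ge0 // ltW.
have := ler_wpM2l (ltW L0) sc.
rewrite /G /psi /phi /Gam !big_ord1; lra.
Qed.

Lemma descent_next t : (t < T)%N ->
  G t.+1 * f (u t.+1) <= gamma t.+1 * linmod f gradf (x t.+1) (xhat t.+1)
    + G t * f (u t) + Lt t.+1 / 2 * nrm (z t - xhat t.+1) ^+ 2.
Proof.
move=> tT; have G1 := Gam_gt0 (leqW tT); have G0 := Gam_gt0 (leqW (ltnW tT)).
have g0 := gamma_ge0 (leqW tT); have gsq := gamma_sqr (leqW tT).
have L1 := Lt_gt0 tT; have t0 : 0 <= tau t by rewrite divr_ge0 // ltW.
have [xE _ uE] := iteration tT.
have ux : u t.+1 - x t.+1 = tau t *: (xhat t.+1 - z t).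
  by rewrite uE xE opprD addrACA subrr addr0 scalerBr.
have := u_descent tT; rewrite ux nrmZ // ger0_norm // (nrm_distC nrm_norm).
rewrite {2}uE linmod_comb.
set N := nrm (z t - xhat t.+1); set lx := linmod _ _ _ (xhat t.+1).
set lu := linmod _ _ _ (u t) => desc.
have lu_le : lu <= f (u t) := linmod_le f_convex f_grad _ _.
have Gtau : G t.+1 * tau t = gamma t.+1 by rewrite /tau mulrC divfK ?gt_eqF.
have G1tau : G t.+1 * (1 - tau t) = G t by rewrite mulrBr mulr1 Gtau /G GamS addrK.
have Gsq : G t.+1 * (Lt t.+1 / 2 * (tau t * N) ^+ 2) <= Lt t.+1 / 2 * N ^+ 2.
  have -> : G t.+1 * (Lt t.+1 / 2 * (tau t * N) ^+ 2) =
            Lt t.+1 / 2 * N ^+ 2 * (gamma t.+1 ^+ 2 / G t.+1).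
    by rewrite /tau; field; rewrite gt_eqF.
  apply: ler_piMr; first by rewrite mulr_ge0 ?sqr_ge0 // divr_ge0 // ltW.
  by rewrite ler_pdivrMr // mul1r.
have p1 : G t.+1 * (tau t * lx) = gamma t.+1 * lx by rewrite mulrA Gtau.
have p2 : G t.+1 * ((1 - tau t) * lu) = G t * lu by rewrite mulrA G1tau.
have := ler_wpM2l (ltW G1) desc; have := ler_wpM2l (ltW G0) lu_le; lra.
Qed.

Lemma prox_next t : (t < T)%N ->
  gamma t.+1 * linmod f gradf (x t.+1) (xhat t.+1)
    + Lt t * (2^-1 * nrm (z t - xhat t.+1) ^+ 2) <=
  gamma t.+1 * linmod f gradf (x t.+1) (z t.+1) + Lt t * bregman d d' (z t) (z t.+1).
Proof.
move=> tT; have L0 := Lt_gt0 (ltnW tT); have [_ [Qxh xh_min] _] := iteration tT.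
have zQo : Qo Q d (z t) := argmin_Qo L0 (@phiB t) (z_min (ltnW tT)).
have := bregman_ge_half_sqr Q_convex d_dist zQo Qxh; rewrite (nrm_distC nrm_norm).
have := xh_min _ (z_min tT).1; rewrite !dotvZl.
set D1 := dotv _ (xhat t.+1 - z t); set D2 := dotv _ (z t.+1 - z t) => prox half.
have := ler_wpM2l (ltW L0) prox.
have LtK D : Lt t * (gamma t.+1 / Lt t * D) = gamma t.+1 * D by field; rewrite gt_eqF.
rewrite mulrDr [X in _ <= X]mulrDr !LtK.
have lB y : gamma t.+1 * linmod f gradf (x t.+1) y - gamma t.+1 * linmod f gradf (x t.+1) (z t)
    = gamma t.+1 * dotv (gradf (x t.+1)) (y - z t) by rewrite -mulrBr linmodB.
have := lB (xhat t.+1); have := lB (z t.+1); rewrite -/D1 -/D2.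
have := ler_wpM2l (ltW L0) half; lra.
Qed.

Lemma estimate_step t : (t < T)%N ->
  G t * f (u t) <= psi t (z t) + E t -> G t.+1 * f (u t.+1) <= psi t.+1 (z t.+1) + E t.+1.
Proof.
move=> tT IH; have L0 := Lt_gt0 (ltnW tT).
have := argmin_three_point Q_closed Q_convex d_dist L0 (@phiB t) (z_min (ltnW tT)) (z_min tT).1.
have := descent_next tT; have := prox_next tT.
have phiS : phi t.+1 (z t.+1) = phi t (z t.+1) + gamma t.+1 * linmod f gradf (x t.+1) (z t.+1).
  by rewrite /phi big_ord_recr.
have ES : E t.+1 = E t + (Lt t - Lt t.+1) *
    (d (z t.+1) - 2^-1 * nrm (z t - xhat t.+1) ^+ 2) by rewrite /E big_ord_recr.
rewrite /psi phiS ES; rewrite /psi in IH; rewrite /bregman; lra.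
Qed.

Lemma estimate_invariant t : (t <= T)%N -> G t * f (u t) <= psi t (z t) + E t.
Proof.
elim: t => [|t IH] tT; first by rewrite /E big_ord0 addr0 estimate_invariant0.
exact: estimate_step tT (IH (ltnW tT)).
Qed.

Lemma estimate_sequence_rate y : Q y ->
  f (u T) - f y <= (G T)^-1 * (Lt T * d y + E T).
Proof.
move=> Qy; have inv := estimate_invariant (leqnn T).
have zT_le := (z_min (leqnn T)).2 y Qy; rewrite /psi /= in inv zT_le.
have phi_le : phi T y <= G T * f y.
  rewrite /phi /G /Gam mulr_suml; apply: ler_sum => k _.
  by rewrite ler_wpM2l ?gamma_ge0 ?(ltnW (ltn_ord k)) ?linmod_le.
have GT := Gam_gt0 (leqW (leqnn T)).
by rewrite -(ler_pM2l GT) mulrA mulfV ?gt_eqF // mul1r; lra.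
Qed.

End EstimateSequence.

Unset Implicit Arguments.

Theorem theorem2 (R : realType) (n : nat)
  (nrm : 'rV[R]_n -> R) (Q : set 'rV[R]_n)
  (f : 'rV[R]_n -> R) (gradf : 'rV[R]_n -> 'rV[R]_n) (L : R)
  (d : 'rV[R]_n -> R) (d' : 'rV[R]_n -> 'rV[R]_n)
  (xstar : 'rV[R]_n) (T : nat) (gamma Lt : nat -> R)
  (x z xhat u : nat -> 'rV[R]_n) :
  (* standing assumptions *)
  is_norm nrm ->
  closed Q -> convex_setv Q ->
  convex_funv f -> is_gradient f gradf ->
  0 < L ->
  (forall y w, Q y -> Q w ->
     dual_norm nrm (gradf y - gradf w) <= L * nrm (y - w)) ->
  dist_gen nrm Q d d' ->
  (* x* minimizes f over Q *)
  is_argmin Q f xstar ->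
  (* parameters *)
  0 < gamma 0%N <= 1 ->
  (forall t, (t <= T.+1)%N -> 0 <= gamma t) ->
  (forall t, (t <= T.+1)%N -> gamma t ^+ 2 <= Gam gamma t) ->
  (* initialisation *)
  Lt 0%N = L ->
  is_argmin Q d (x 0%N) -> d (x 0%N) = 0 ->
  is_argmin Q (fun y => gamma 0%N * linmod f gradf (x 0%N) y + Lt 0%N * d y)
    (u 0%N) ->
  z 0%N = u 0%N ->
  x 1%N = (gamma 1%N / Gam gamma 1%N) *: z 0%N
          + (1 - gamma 1%N / Gam gamma 1%N) *: u 0%N ->
  is_prox Q d d' (z 0%N) ((gamma 1%N / Lt 0%N) *: gradf (x 1%N)) (xhat 1%N) ->
  u 1%N = (gamma 1%N / Gam gamma 1%N) *: xhat 1%N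
          + (1 - gamma 1%N / Gam gamma 1%N) *: u 0%N ->
  (* iterations t = 1, ..., T *)
  (forall t, (1 <= t <= T)%N ->
     (0 < Lt t <= L) /\
         f (u t) <= linmod f gradf (x t) (u t) + Lt t / 2 * nrm (u t - x t) ^+ 2 /\
         is_argmin Q (fun y => \sum_(k < t.+1) gamma k * linmod f gradf (x k) y
                               + Lt t * d y) (z t) /\
         x t.+1 = (gamma t.+1 / Gam gamma t.+1) *: z t
                  + (1 - gamma t.+1 / Gam gamma t.+1) *: u t /\
         is_prox Q d d' (z t) ((gamma t.+1 / Lt t) *: gradf (x t.+1)) (xhat t.+1) /\
         u t.+1 = (gamma t.+1 / Gam gamma t.+1) *: xhat t.+1
                  + (1 - gamma t.+1 / Gam gamma t.+1) *: u t) ->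
  f (u T) - f xstar <=
    (Gam gamma T)^-1 *
      (Lt T * d xstar
       + \sum_(t < T) (Lt t - Lt t.+1) *
           (d (z t.+1) - 2^-1 * nrm (z t - xhat t.+1) ^+ 2)).
Proof.
move=> nrm_norm Q_closed Q_convex f_convex f_grad L0 gradf_lip d_dist [Qxs _]
  gamma0 gamma_ge0 gamma_sqr Lt0 x0_min d_x0 [Qu0 u0_min] z0 x1 xhat1 u1 iter.
apply: (estimate_sequence_rate (x := x) (z := z) (xhat := xhat) (u := u) nrm_norm
  Q_closed Q_convex f_convex f_grad d_dist gamma0 gamma_ge0 gamma_sqr) => // -[|t] tT.
- by rewrite Lt0.
- by case/andP: (iter t.+1 tT).1.
- by rewrite z0; split=> // y Qy; rewrite !big_ord1; exact: u0_min.
- by case: (iter t.+1 tT) => _ [_ []].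
- rewrite Lt0; apply: (descent_lemma nrm_norm Q_convex f_convex f_grad gradf_lip) => //.
  exact: x0_min.1.
- by case: (iter t.+1 tT) => _ [].
- by split.
- by case: (iter t.+1 (ltnW tT)) => _ [_ [_ [? [? ?]]]]; split.
Qed.
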